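(* Let $J$ be a finite-dimensional Jordan algebra over a field of characteristic different from $2$ such that every linear endomorphism of $J$ is a quasiderivation, i.e. $QDer(J)=End(J)$. Then either $J$ is a field or $J$ has zero multiplication.
   Context: A Jordan algebra is a commutative algebra satisfying $(x^2,y,x)=0$, where $(a,b,c)=(ab)c-a(bc)$. A linear map $f:J\to J$ is a quasiderivation if there exists a linear map $Q:J\to J$ with $Q(xy)=f(x)y+xf(y)$ for all $x,y\in J$; $QDer(J)$ is the set of quasiderivations and $End(J)$ the set of all linear endomorphisms of $J$. *)

From HB Require Import structures.
From mathcomp Require Import all_boot all_order all_algebra.
Set Implicit Arguments. Unset Strict Implicit. Unset Printing Implicit Defensive.
Import GRing.Theory.
Local Open Scope ring_scope.

Definition bilinear_mul (F : fieldType) (V : vectType F) (mul : V -> V -> V) : Prop :=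
  (forall (a : F) (x y z : V), mul (a *: x + y) z = a *: mul x z + mul y z) /\
  (forall (a : F) (x y z : V), mul x (a *: y + z) = a *: mul x y + mul x z).

Definition associator (F : fieldType) (V : vectType F) (mul : V -> V -> V) (a b c : V) : V :=
  mul (mul a b) c - mul a (mul b c).

Definition jordan_algebra (F : fieldType) (V : vectType F) (mul : V -> V -> V) : Prop :=
  bilinear_mul mul /\
  (forall x y : V, mul x y = mul y x) /\
  (forall x y : V, associator mul (mul x x) y x = 0).

Definition quasiderivation (F : fieldType) (V : vectType F) (mul : V -> V -> V)
  (f : 'End(V)) : Prop :=
  exists Q : 'End(V), forall x y : V, Q (mul x y) = mul (f x) y + mul x (f y).

Definition is_field_algebra (F : fieldType) (V : vectType F) (mul : V -> V -> V) : Prop :=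
  (forall x y z : V, mul (mul x y) z = mul x (mul y z)) /\
  (forall x y : V, mul x y = mul y x) /\
  exists e : V, e != 0 /\ (forall x : V, mul e x = x) /\
    (forall x : V, x != 0 -> exists y : V, mul x y = e).

Definition zero_multiplication (F : fieldType) (V : vectType F) (mul : V -> V -> V) : Prop :=
  forall x y : V, mul x y = 0.

From HB Require Import structures.
From mathcomp Require Import all_boot all_order all_algebra.
From mathcomp Require Import ring.
From Stdlib Require Import Classical.
Import GRing.Theory.
Local Open Scope ring_scope.

(* The key tool is the rank-one endomorphism x |-> phi(x) c, for a coordinate
   functional phi and a vector c: its companion map Q satisfies
   Q(xy) = phi(x) cy + phi(y) xc, so every product xy = 0 forces the relations
   phi(x) cy + phi(y) xc = 0.  From these relations (and 2 != 0) we show that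
   a single nonzero zero divisor makes the multiplication vanish identically.
   Without zero divisors, left multiplication by a nonzero u is bijective; in
   dimension >= 2 the same relations applied to w.w = u.v (w a second basis
   vector) produce a new zero divisor, so the dimension is at most 1.  Finally
   a commutative algebra of dimension <= 1 is a field or has zero product. *)

Lemma lfun_of_linear {F : fieldType} {V : vectType F} {g : V -> V} :
  linear g -> exists f : 'End(V), forall v, f v = g v.
Proof.
move=> g_lin.
pose gL : {linear V -> V} := HB.pack g (GRing.isLinear.Build _ _ _ _ g g_lin).
by exists (linfun gL) => v; rewrite lfunE.
Qed.

Section Coordinates.
Context {F : fieldType} {V : vectType F}.
Let B := vbasis (fullv : {vspace V}).

Lemma coord_vbasis_eq0 (v : V) : (forall i, coord B i v = 0) -> v = 0.
Proof.
move=> coord0; rewrite (coord_vbasis (memvf v)); apply: big1 => i _.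
by rewrite coord0 scale0r.
Qed.

Lemma coord_vbasis_neq0 {v : V} : v != 0 -> exists i, coord B i v != 0.
Proof.
move=> vn0; apply/existsP; apply: contraNT vn0 => /existsPn coord0.
by apply/eqP/coord_vbasis_eq0 => i; apply/eqP/negbNE/coord0.
Qed.

Lemma dim_le1_line : (\dim (fullv : {vspace V}) <= 1)%N ->
  forall v : V, exists k : F, v = k *: vpick fullv.
Proof.
move=> dim_le1 v; apply/vlineP.
have [full0|fulln0] := eqVneq (fullv : {vspace V}) 0%VS.
  by move: (memvf v); rewrite full0 memv0 => /eqP ->; rewrite mem0v.
suff -> : <[vpick fullv]>%VS = (fullv : {vspace V}) by rewrite memvf.
apply/eqP; rewrite eqEdim subvf dim_vline vpick0 fulln0 /=.
exact: dim_le1.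
Qed.

End Coordinates.

Section CommutativeAlgebra.
Context {F : fieldType} {V : vectType F} {mul : V -> V -> V}.
Hypothesis mul_bilinear : bilinear_mul mul.
Hypothesis mulC : forall x y : V, mul x y = mul y x.

Lemma mul_addr x y z : mul x (y + z) = mul x y + mul x z.
Proof. by rewrite -{1}[y]scale1r (proj2 mul_bilinear) scale1r. Qed.

Lemma mul_zeror x : mul x 0 = 0.
Proof.
have := (proj2 mul_bilinear) (-1) x x x.
by rewrite scaleN1r addNr scaleN1r addNr.
Qed.

Lemma mul_scaler a x y : mul x (a *: y) = a *: mul x y.
Proof. by rewrite -[a *: y]addr0 (proj2 mul_bilinear) mul_zeror addr0. Qed.

Lemma mul_scalel a x y : mul (a *: x) y = a *: mul x y.
Proof. by rewrite mulC mul_scaler mulC. Qed.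

Lemma mul_linear u : linear (mul u).
Proof. by move=> a x y; rewrite (proj2 mul_bilinear). Qed.

(* A commutative algebra of dimension at most one is a field or has zero
   multiplication, according as u.u is nonzero or zero for a spanning u. *)
Lemma dim_le1_field_or_zero : (\dim (fullv : {vspace V}) <= 1)%N ->
  is_field_algebra mul \/ zero_multiplication mul.
Proof.
move=> /dim_le1_line rep; set u := vpick fullv in rep.
have mul_rep a b : mul (a *: u) (b *: u) = (a * b) *: mul u u.
  by rewrite mul_scalel mul_scaler scalerA.
have [uu0|uun0] := eqVneq (mul u u) 0.
  right => x y; have [a ->] := rep x; have [b ->] := rep y.
  by rewrite mul_rep uu0 scaler0.
have [k uuE] := rep (mul u u).
have kn0 : k != 0 by apply: contraNneq uun0 => k0; rewrite uuE k0 scale0r.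
have un0 : u != 0 by apply: contraNneq uun0 => ->; rewrite mul_zeror.
have mulE a b : mul (a *: u) (b *: u) = (a * b * k) *: u.
  by rewrite mul_rep {1}uuE scalerA.
left; split; [|split => //].
  move=> x y z; have [a ->] := rep x; have [b ->] := rep y.
  have [c ->] := rep z.
  by rewrite !mulE; congr (_ *: _); ring.
exists (k^-1 *: u); split; first by rewrite scaler_eq0 invr_eq0 negb_or kn0.
split=> [x|x xn0]; have [a xE] := rep x; rewrite xE.
  by rewrite mulE mulrAC mulVf // mul1r.
have an0 : a != 0 by apply: contraNneq xn0 => a0; rewrite xE a0 scale0r.
exists ((a * k * k)^-1 *: u); rewrite mulE; congr (_ *: _); field.
by rewrite an0 kn0.
Qed.

Hypothesis every_end_quasiderivation : forall f : 'End(V), quasiderivation mul f.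
Hypothesis two_neq0 : (2%:R : F) != 0.
Let B := vbasis (fullv : {vspace V}).

Lemma rank_one_quasiderivation i c : exists Q : 'End(V), forall x y,
  Q (mul x y) = coord B i x *: mul c y + coord B i y *: mul x c.
Proof.
have [f fE] : exists f : 'End(V), forall v, f v = coord B i v *: c.
  by apply: lfun_of_linear => a x y; rewrite linearP /= scalerDl scalerA.
have [Q QE] := every_end_quasiderivation f.
by exists Q => x y; rewrite QE !fE mul_scalel mul_scaler (mulC c).
Qed.

Lemma product_zero_relation {x y : V} (c : V) i : mul x y = 0 ->
  coord B i x *: mul c y + coord B i y *: mul x c = 0.
Proof.
by move=> xy0; have [Q QE] := rank_one_quasiderivation i c; rewrite -QE xy0 linear0.
Qed.

Lemma square_zero_annihilates {a : V} : a != 0 -> mul a a = 0 ->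
  forall c, mul c a = 0.
Proof.
move=> an0 aa0 c; have [i ai_n0] := coord_vbasis_neq0 an0.
have := product_zero_relation c i aa0; rewrite (mulC a c) -scalerDl.
move/eqP; rewrite scaler_eq0 => /orP[|/eqP//].
by rewrite -mulr2n -mulr_natr mulf_eq0 (negbTE ai_n0) (negbTE two_neq0).
Qed.

(* The right factor of a nontrivial zero product annihilates the algebra:
   either ac = 0 and the relations give cb = 0 directly, or the relations
   force b to be a multiple of a, whence a.a = 0. *)
Lemma zero_divisor_annihilates {a b : V} : a != 0 -> b != 0 -> mul a b = 0 ->
  forall c, mul c b = 0.
Proof.
move=> an0 bn0 ab0 c; have [i0 ai0_n0] := coord_vbasis_neq0 an0.
pose mu := coord B i0 b / coord B i0 a.
have cbE : mul c b = - mu *: mul a c.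
  apply: (scalerI ai0_n0); rewrite scalerA /mu mulrN mulrCA divff // mulr1.
  by apply/eqP; rewrite scaleNr -subr_eq0 opprK product_zero_relation.
have [ac0|acn0] := eqVneq (mul a c) 0; first by rewrite cbE ac0 scaler0.
have bE : b = mu *: a.
  apply/eqP; rewrite -subr_eq0; apply/eqP/coord_vbasis_eq0 => i.
  rewrite linearB linearZ /=.
  have := product_zero_relation c i ab0.
  rewrite cbE scalerA -scalerDl => /eqP; rewrite scaler_eq0 (negbTE acn0) orbF.
  by move=> /eqP rel; rewrite -rel /B; ring.
have mun0 : mu != 0 by apply: contraNneq bn0 => mu0; rewrite bE mu0 scale0r.
have aa0 : mul a a = 0.
  by apply/eqP; move: ab0; rewrite bE mul_scaler => /eqP; rewrite scaler_eq0 (negbTE mun0).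
by rewrite bE mul_scaler square_zero_annihilates // scaler0.
Qed.

Lemma zero_divisor_zero_multiplication {a b : V} : a != 0 -> b != 0 -> mul a b = 0 ->
  zero_multiplication mul.
Proof.
move=> an0 bn0 ab0 x y; have [->|yn0] := eqVneq y 0; first exact: mul_zeror.
apply: (zero_divisor_annihilates bn0 yn0).
by rewrite mulC (zero_divisor_annihilates an0 bn0 ab0).
Qed.

Lemma left_mul_onto {u : V} : (forall a b, a != 0 -> b != 0 -> mul a b != 0) ->
  u != 0 -> forall z, exists v, mul u v = z.
Proof.
move=> no_zd un0 z; have [L LE] := lfun_of_linear (mul_linear u).
have kerL : lker L == 0%VS.
  apply/lker0P => x y Lxy; apply/eqP; rewrite -subr_eq0; apply: contraTT isT.
  by move=> /(no_zd u _ un0); rewrite -LE linearB /= Lxy subrr eqxx.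
by exists ((L^-1)%VF z); rewrite -LE lker0_lfunVK.
Qed.

(* Without zero divisors the dimension is at most one: for basis vectors
   u, w and u.v = w.w, the relation for the coordinate phi of w gives
   u.(2w - phi(v) u) = 0, although 2w - phi(v) u has phi-coordinate 2. *)
Lemma no_zero_divisors_dim_le1 :
  (forall a b, a != 0 -> b != 0 -> mul a b != 0) ->
  (\dim (fullv : {vspace V}) <= 1)%N.
Proof.
move=> no_zd; rewrite leqNgt; apply/negP => dim_gt1.
pose i0 : 'I_(\dim (fullv : {vspace V})) := Ordinal (ltnW dim_gt1).
pose i1 : 'I_(\dim (fullv : {vspace V})) := Ordinal dim_gt1.
have freeB : free B := basis_free (vbasisP fullv).
pose u := B`_i0; pose w := B`_i1.
have cu : coord B i1 u = 0 by rewrite coord_free.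
have cw : coord B i1 w = 1 by rewrite coord_free // eqxx.
have un0 : u != 0.
  apply/eqP => u0; have := coord_free i0 i0 freeB; rewrite -/u u0 linear0 eqxx.
  by move/eqP; rewrite eq_sym oner_eq0.
have [v uvE] := left_mul_onto no_zd un0 (mul w w).
have [Q QE] := rank_one_quasiderivation i1 u.
have zd : mul u ((2%:R : F) *: w + (- coord B i1 v) *: u) = 0.
  have Qww := QE w w; have Quv := QE u v.
  rewrite cw cu !scale1r scale0r add0r (mulC w u) in Qww Quv.
  rewrite uvE in Quv.
  by rewrite mul_addr !mul_scaler scaleNr -Quv Qww scaler_nat mulr2n subrr.
have nz : (2%:R : F) *: w + (- coord B i1 v) *: u != 0.
  apply: contra_neq two_neq0 => /(congr1 (coord B i1)).
  by rewrite linearD !linearZ /= cw cu linear0 mulr1 mulr0 addr0.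
by move: (no_zd u _ un0 nz); rewrite zd eqxx.
Qed.

End CommutativeAlgebra.

Theorem mainTheorem12 (F : fieldType) (V : vectType F) (mul : V -> V -> V)
  (hchar : 2%N \notin [pchar F])
  (hJ : jordan_algebra mul)
  (hQ : forall f : 'End(V), quasiderivation mul f) :
  is_field_algebra mul \/ zero_multiplication mul.
Proof.
have [mul_bilinear [mulC _]] := hJ.
have two_neq0 : (2%:R : F) != 0 by move: hchar; rewrite inE.
have [[a [b [an0 [bn0 ab0]]]] | no_zd] :=
  classic (exists a b : V, a != 0 /\ b != 0 /\ mul a b = 0).
  right; exact: (zero_divisor_zero_multiplication mul_bilinear mulC hQ two_neq0
                   an0 bn0 ab0).
apply: (dim_le1_field_or_zero mul_bilinear mulC).
apply: (no_zero_divisors_dim_le1 mul_bilinear mulC hQ two_neq0) => a b an0 bn0.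
by apply/eqP => ab0; apply: no_zd; exists a, b.
Qed.
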